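(* For every epistemic transition system, every history $h$ of it, every coalition $C$ and every formula $\phi\in\Phi$: if $h\Vdash\mathsf{H}_C\phi$, then $h\Vdash\mathsf{K}_C\mathsf{H}_C\phi$.
   Context: Fix a set of agents $\mathcal{A}$; a coalition is a subset of $\mathcal{A}$. Language $\Phi$: $\phi ::= p \mid \neg\phi \mid \phi\to\phi \mid \mathsf{K}_C\phi \mid \mathsf{H}_C\phi$ ($C\subseteq\mathcal{A}$). An epistemic transition system is a tuple $(W,\{\sim_a\}_{a\in\mathcal{A}},V,M,\pi)$ with $W$ a set of states, each $\sim_a$ an equivalence relation on $W$, $V$ a nonempty set, $M\subseteq W\times V^{\mathcal{A}}\times W$, $\pi$ mapping propositional variables to subsets of $W$. For profiles $\mathbf{s}_1\in V^{C_1},\mathbf{s}_2\in V^{C_2}$ and $C\subseteq C_1\cap C_2$, $\mathbf{s}_1=_C\mathbf{s}_2$ means $(\mathbf{s}_1)_a=(\mathbf{s}_2)_a$ for all $a\in C$. A history is a sequence $(w_0,\mathbf{s}_1,w_1,\dots,\mathbf{s}_n,w_n)$, $n\ge0$, with $w_i\in W$, $\mathbf{s}_i\in V^{\mathcal{A}}$, $(w_i,\mathbf{s}_{i+1},w_{i+1})\in M$; $hd(h)$ is its last element, and $h::\mathbf{s}::w$ denotes extension. $h\approx_a h'$ iff the histories have the same length $n$, their $i$-th states are $\sim_a$-related for all $i$, and their $i$-th profiles agree at $a$ for all $i$; $h\approx_C h'$ iff $h\approx_a h'$ for all $a\in C$. Satisfaction: $h\Vdash p$ iff $hd(h)\in\pi(p)$;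 Boolean clauses standard; $h\Vdash\mathsf{K}_C\phi$ iff $h'\Vdash\phi$ for all histories $h'$ with $h\approx_C h'$; $h\Vdash\mathsf{H}_C\phi$ iff there is $\mathbf{s}\in V^C$ such that for every history $h'::\mathbf{s}'::w'$ with $h\approx_C h'$ and $\mathbf{s}=_C\mathbf{s}'$, $h'::\mathbf{s}'::w'\Vdash\phi$. *)

From Stdlib Require Import RelationClasses.
Set Implicit Arguments.

Section ETSDefs.
Variable Agent : Type.

Definition coalition := Agent -> Prop.

Inductive formula : Type :=
| FVar : nat -> formula
| FNeg : formula -> formula
| FImp : formula -> formula -> formula
| FK : coalition -> formula -> formula
| FH : coalition -> formula -> formula.

Record ETS : Type := {
  W : Type;
  sim : Agent -> W -> W -> Prop;
  sim_equiv : forall a, Equivalence (sim a);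
  V : Type;
  V_nonempty : inhabited V;
  M : W -> (Agent -> V) -> W -> Prop;
  pi : nat -> W -> Prop
}.

Variable E : ETS.

(* Sequences (w0, s1, w1, ..., sn, wn); Ext h s w is h::s::w. *)
Inductive hist : Type :=
| Start : W E -> hist
| Ext : hist -> (Agent -> V E) -> W E -> hist.

Definition hd (h : hist) : W E :=
  match h with Start w => w | Ext _ _ w => w end.

Fixpoint is_history (h : hist) : Prop :=
  match h with
  | Start _ => True
  | Ext h' s w => is_history h' /\ M E (hd h') s w
  end.

Fixpoint hist_sim (a : Agent) (h h' : hist) : Prop :=
  match h, h' with
  | Start w, Start w' => sim E a w w'
  | Ext g s w, Ext g' s' w' => hist_sim a g g' /\ s a = s' a /\ sim E a w w'
  | _, _ => False
  end.

Definition hist_simC (C : coalition) (h h' : hist) : Prop :=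
  forall a, C a -> hist_sim a h h'.

Definition prof_eqC (C : coalition) (s1 s2 : Agent -> V E) : Prop :=
  forall a, C a -> s1 a = s2 a.

(* Satisfaction; quantification over h' ranges over histories. A profile
   of coalition C is represented by a total function Agent -> V E of which
   only the values on C matter. *)
Fixpoint sat (h : hist) (phi : formula) : Prop :=
  match phi with
  | FVar p => pi E p (hd h)
  | FNeg psi => ~ sat h psi
  | FImp psi chi => sat h psi -> sat h chi
  | FK C psi => forall h', is_history h' -> hist_simC C h h' -> sat h' psi
  | FH C psi => exists s : Agent -> V E,
      forall h' s' w', is_history (Ext h' s' w') -> hist_simC C h h' ->
        prof_eqC C s s' -> sat (Ext h' s' w') psi
  end.
End ETSDefs.

(* Knowing how is positively introspective because the strategy witnessing
   H_C phi at h also works at every h' with h ~_C h': the histories over which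
   it must succeed from h' are, by transitivity of ~_C, among those it already
   succeeds over from h. *)
From Stdlib Require Import RelationClasses.

Section Indistinguishability.
Variables (Agent : Type) (E : ETS Agent).

Lemma hist_sim_trans (a : Agent) : Transitive (@hist_sim Agent E a).
Proof.
  pose proof (sim_equiv E a) as Hequiv.
  intros h1; induction h1 as [w1 | g1 IH s1 w1];
    intros [w2 | g2 s2 w2] [w3 | g3 s3 w3]; simpl; try tauto.
  - intros H12 H23; now transitivity w2.
  - intros [Hg12 [Hs12 Hw12]] [Hg23 [Hs23 Hw23]]; repeat split.
    + now apply IH with g2.
    + congruence.
    + now transitivity w2.
Qed.

Lemma hist_simC_trans (C : coalition Agent) : Transitive (@hist_simC Agent E C).
Proof.
  intros h1 h2 h3 H12 H23 a Ha.
  apply hist_sim_trans with h2; auto.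
Qed.

End Indistinguishability.

Theorem lemma10 (Agent : Type) (E : ETS Agent) (h : hist E)
  (C : coalition Agent) (phi : formula Agent) :
  is_history h ->
  sat h (FH C phi) -> sat h (FK C (FH C phi)).
Proof.
  intros _ [s Hs] h1 _ H1.
  exists s; intros h' s' w' Hhist H1' Hs'.
  apply Hs; auto.
  now apply hist_simC_trans with h1.
Qed.
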